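(* Let $G$ be a directed graph with real edge weights and no cycle of negative or zero weight. Let $P_1$ be a shortest path from $s_1$ to $t_1$ and $P_2$ a shortest path from $s_2$ to $t_2$, and let $(v_1,w_1),\dots,(v_r,w_r)$ be the concordant pairs for $P_1,P_2$. Then: (1) for $i\neq j$, $V(P_1[v_i,w_i])\cap V(P_1[v_j,w_j])=\emptyset$ and $V(P_2[v_i,w_i])\cap V(P_2[v_j,w_j])=\emptyset$; (2) if the concordant pairs are ordered along $P_1$ as $(v_1,w_1),\dots,(v_r,w_r)$, then along $P_2$ they appear in exactly the reversed order.
   Context: For a path $P$ and vertices $x,y$ on $P$, $x$ precedes $y$ on $P$ if $x=y$ or $x$ appears before $y$ on $P$; then $P[x,y]$ is the subpath from $x$ to $y$. Two paths, from $x_1$ to $y_1$ and from $x_2$ to $y_2$, are internally vertex-disjoint if they share no vertex outside $\{x_1,y_1\}\cap\{x_2,y_2\}$. Concordant pair: for paths $P_1$ from $x_1$ to $y_1$ and $P_2$ from $x_2$ to $y_2$, a pair of vertices $(a,b)$, not contained in the set $\{x_1,y_1\}\cap\{x_2,y_2\}$, is a concordant pair for $P_1,P_2$ if $a$ precedes $b$ on both $P_1$ and $P_2$, the subpaths $P_1[x_1,a]$ and $P_2[x_2,a]$ are internally vertex-disjoint, and the subpaths $P_1[b,y_1]$ and $P_2[b,y_2]$ are internally vertex-disjoint. *)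

From mathcomp Require Import all_boot all_order all_algebra.
From mathcomp Require Export reals.
Set Implicit Arguments. Unset Strict Implicit. Unset Printing Implicit Defensive.
Import Order.TTheory GRing.Theory Num.Theory.
Local Open Scope ring_scope.

Definition walk_weight (V : eqType) (R : numDomainType) (w : V -> V -> R)
  (p : seq V) : R :=
  match p with [::] => 0 | x :: s => \sum_(e <- pairmap w x s) e end.

Definition is_path (V : eqType) (E : rel V) (x y : V) (p : seq V) : Prop :=
  exists2 q, p = x :: q & [/\ path E x q, last x q = y & uniq p].

(* A (simple) directed cycle x_0 ... x_(k-1) (k >= 1, loops allowed):
   edges x_i -> x_(i+1) and x_(k-1) -> x_0. *)
Definition is_cycle (V : eqType) (E : rel V) (c : seq V) : Prop :=
  [/\ c != [::], cycle E c & uniq c].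

Definition cycle_weight (V : eqType) (R : numDomainType) (w : V -> V -> R)
  (c : seq V) : R :=
  match c with [::] => 0 | x :: s => \sum_(e <- pairmap w x (rcons s x)) e end.

Definition shortest_path (V : eqType) (R : numDomainType) (E : rel V)
  (w : V -> V -> R) (x y : V) (p : seq V) : Prop :=
  is_path E x y p /\ forall q, is_path E x y q -> walk_weight w p <= walk_weight w q.

Definition precedes (V : eqType) (P : seq V) (x y : V) : Prop :=
  [/\ x \in P, y \in P & (index x P <= index y P)%N].

Definition subpath (V : eqType) (P : seq V) (x y : V) : seq V :=
  take (index y P - index x P).+1 (drop (index x P) P).

Definition int_disjoint (V : eqType) (Q1 : seq V) (x1 y1 : V)
  (Q2 : seq V) (x2 y2 : V) : Prop :=
  forall v, v \in Q1 -> v \in Q2 -> v \in [:: x1; y1] /\ v \in [:: x2; y2].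

Definition concordant (V : eqType) (P1 : seq V) (x1 y1 : V)
  (P2 : seq V) (x2 y2 : V) (a b : V) : Prop :=
  [/\ ~ (a \in [:: x1; y1] /\ a \in [:: x2; y2]),
      ~ (b \in [:: x1; y1] /\ b \in [:: x2; y2]),
      precedes P1 a b /\ precedes P2 a b,
      int_disjoint (subpath P1 x1 a) x1 a (subpath P2 x2 a) x2 a
    & int_disjoint (subpath P1 b y1) b y1 (subpath P2 b y2) b y2].

From mathcomp Require Import all_boot all_order all_algebra reals.
From mathcomp Require Import zify lra.
Import Order.TTheory GRing.Theory Num.Theory.
Set Implicit Arguments. Unset Strict Implicit. Unset Printing Implicit Defensive.
Local Open Scope ring_scope.

(* Since every cycle has positive weight, so does every nontrivial closed walk,
   and every walk can be shortened to a path with the same ends.  Hence a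
   subpath of a shortest path is a lightest walk between its ends, and two
   shortest paths have the same weight between two vertices that they visit in
   the same order.  If P1 visits x before y while P2 visits y before x, then
   P1[x,y] followed by P2[y,x] is a closed walk of positive weight; comparing
   the two paths from this crossing to a later common vertex, or from an
   earlier one, would give it weight zero.  The disjointness conditions of
   concordance reduce every ordering claim about two concordant pairs to such
   a forbidden configuration. *)

Definition is_walk (V : eqType) (E : rel V) (x y : V) (p : seq V) : Prop :=
  exists2 q, p = x :: q & path E x q /\ last x q = y.

Section Precedes.
Variables (V : eqType) (P : seq V).

Lemma precedes_refl x : x \in P -> precedes P x x.
Proof. by move=> xP; split. Qed.

Lemma precedes_meml x y : precedes P x y -> x \in P.
Proof. by case. Qed.

Lemma precedes_memr x y : precedes P x y -> y \in P.
Proof. by case. Qed.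

Lemma ltn_index_not_precedes x y : x \in P -> y \in P ->
  (index x P < index y P)%N <-> ~ precedes P y x.
Proof.
move=> xP yP; rewrite ltnNge; split=> [/negP le_yx [_ _] // | not_yx].
by apply/negP=> le_yx; apply: not_yx.
Qed.

Lemma precedes_trans x y z : precedes P x y -> precedes P y z -> precedes P x z.
Proof. by move=> [xP _ le_xy] [_ zP le_yz]; split=> //; apply: leq_trans le_yz. Qed.

Lemma precedes_total x y : x \in P -> y \in P -> precedes P x y \/ precedes P y x.
Proof.
by move=> xP yP; case: (leqP (index x P) (index y P)) => [|/ltnW] le; [left|right].
Qed.

Lemma precedes_of_not_precedes x y : x \in P -> y \in P ->
  ~ precedes P y x -> precedes P x y.
Proof. by move=> xP yP; case: (precedes_total xP yP). Qed.

Lemma subpath_consE a b : precedes P a b ->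
  exists2 q, subpath P a b = a :: q & last a q = b.
Proof.
move=> [aP bP le_ab]; have lt_bP : (index b P < size P)%N by rewrite index_mem.
have eq_ab : subpath P a b = a :: behead (subpath P a b) by rewrite /subpath drop_index.
exists (behead (subpath P a b)) => //.
rewrite -[last a _]/(last a (a :: behead (subpath P a b))) -eq_ab -nth_last.
rewrite /subpath size_takel ?size_drop /=; last by lia.
by rewrite nth_take // nth_drop subnKC // nth_index.
Qed.

Lemma subpath_cat x y z : precedes P x y -> precedes P y z ->
  subpath P x z = subpath P x y ++ behead (subpath P y z).
Proof.
move=> [_ _ le_xy] [_ _ le_yz]; rewrite /subpath.
have -> : (index z P - index x P).+1 =
          ((index y P - index x P).+1 + (index z P - index y P))%N by lia.
rewrite takeD drop_drop; congr (_ ++ _).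
have -> : ((index y P - index x P).+1 + index x P = (index y P).+1)%N by lia.
have -> : drop (index y P).+1 P = behead (drop (index y P) P).
  by rewrite -drop1 drop_drop add1n.
by case: (drop (index y P) P).
Qed.

Lemma mem_subpath x y z : uniq P -> precedes P x y ->
  z \in subpath P x y <-> precedes P x z /\ precedes P z y.
Proof.
move=> uP [xP yP le_xy]; rewrite /subpath take_drop addSn subnK //.
have mem_drop_take (s : seq V) i : uniq s ->
    (z \in drop i s) = (z \in s) && (z \notin take i s).
  rewrite -[in uniq s](cat_take_drop i s) cat_uniq => /and3P[_ /hasPn dis _].
  rewrite -[in z \in s](cat_take_drop i s) mem_cat.
  by case zd: (z \in drop i s); rewrite ?orbT ?orbF ?andbN //= (dis z zd).
rewrite mem_drop_take ?take_uniq // take_takel ?(leqW le_xy) //.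
case zP: (z \in P); last first.
  by split=> [/andP[/mem_take]|[[]]]; rewrite zP.
rewrite !in_take // -leqNgt ltnS andbC.
by split=> [/andP[]|[[_ _ ->] [_ _ ->]]].
Qed.

End Precedes.

Section Walks.
Variables (V : eqType) (E : rel V).

Lemma is_path_walk x y p : is_path E x y p -> is_walk E x y p.
Proof. by case=> q -> [pq lq _]; exists q. Qed.

Lemma is_path_uniq x y p : is_path E x y p -> uniq p.
Proof. by case=> q -> []. Qed.

Lemma is_path_loop x p : is_path E x x p -> p = [:: x].
Proof.
case=> q -> [_ lq]; case: q lq => // y q /= lq /andP[+ _].
by rewrite -[in X in X \notin _]lq mem_last.
Qed.

Lemma is_path_precedes s t P v : is_path E s t P -> v \in P ->
  precedes P s v /\ precedes P v t.
Proof.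
case=> q -> [_ <- uq] vP; have := vP; rewrite -index_mem => lt_v.
by split; split; rewrite ?mem_head ?mem_last ?index_last //= eqxx.
Qed.

Lemma subpath_full s t P : is_path E s t P -> subpath P s t = P.
Proof.
case=> q -> [_ <- uq].
by rewrite /subpath index_last // [index s _]/= eqxx subn0 drop0 /= take_size.
Qed.

Lemma is_walk_cat x y z p q : is_walk E x y p -> is_walk E y z q ->
  is_walk E x z (p ++ behead q).
Proof.
case=> p' -> [pp' <-] [q' -> [pq' <-]]; exists (p' ++ q') => //.
by rewrite cat_path last_cat pp' pq'.
Qed.

Lemma subpath_walk s t P a b : is_walk E s t P -> precedes P a b ->
  is_walk E a b (subpath P a b).
Proof.
case=> P' eP [pP _] ab; have [q eq lq] := subpath_consE ab.
exists q => //; split=> //.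
have : sorted E (subpath P a b) by apply/take_sorted/drop_sorted; rewrite eP.
by rewrite eq.
Qed.

End Walks.

Section Weights.
Variables (R : realDomainType) (V : eqType) (w : V -> V -> R).

Lemma walk_weight_cons x y s :
  walk_weight w (x :: y :: s) = w x y + walk_weight w (y :: s).
Proof. by rewrite /walk_weight /= big_cons. Qed.

Lemma walk_weight_cat x s1 s2 :
  walk_weight w (x :: s1 ++ s2) =
  walk_weight w (x :: s1) + walk_weight w (last x s1 :: s2).
Proof. by rewrite /walk_weight pairmap_cat big_cat. Qed.

Lemma walk_weight_walk_cat E x y z p q : is_walk E x y p -> is_walk E y z q ->
  walk_weight w (p ++ behead q) = walk_weight w p + walk_weight w q.
Proof. by case=> p' -> [_ <-] [q' -> _]; rewrite cat_cons walk_weight_cat. Qed.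

Lemma subpath_weightD P x y z : precedes P x y -> precedes P y z ->
  walk_weight w (subpath P x z) =
  walk_weight w (subpath P x y) + walk_weight w (subpath P y z).
Proof.
move=> xy yz; have [q eq lq] := subpath_consE xy; have [r er _] := subpath_consE yz.
by rewrite (subpath_cat xy yz) eq er cat_cons walk_weight_cat lq.
Qed.

Variables (E : rel V).
Hypothesis cycle_weight_gt0 : forall c, is_cycle E c -> 0 < cycle_weight w c.

Lemma walk_shorten x y p : is_walk E x y p ->
  exists2 q, is_path E x y q & q = p \/ walk_weight w q < walk_weight w p.
Proof.
case=> s -> [+ <-] {p y}; elim: s x => [|y s IH] x.
  by move=> _; exists [:: x]; [exists [::] | left].
case/andP=> Exy /IH[q pq q_lt].
have q_le : walk_weight w q <= walk_weight w (y :: s).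
  by case: q_lt => [->|/ltW].
have [q' eq [pq' lq' uq']] := pq.
have pxq : path E x q by rewrite eq /= Exy.
case xq: (x \in q); last first.
  exists (x :: q).
    by exists q => //; split; [exact: pxq | rewrite eq /= lq' | rewrite /= xq].
  case: q_lt => [->|lt]; [by left | right].
  by rewrite eq !walk_weight_cons -eq ltrD2l.
(* The walk returns to x: cutting out the cycle x :: l makes it strictly lighter. *)
clear pq q_lt; move: eq q_le uq' pxq; case/splitPr: q / xq => l r eq q_le.
rewrite cat_uniq => /and3P[ul /norP[xl _] uxr].
rewrite -cat_rcons cat_path last_rcons => /andP[cyc_l pr].
have lr : last x r = last y s.
  by rewrite -lq' -[last y q']/(last y (y :: q')) -eq last_cat.
exists (x :: r); first by exists r.
have cyc : is_cycle E (x :: l) by split; rewrite //= xl.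
right; have := cycle_weight_gt0 cyc.
have split_cycle : walk_weight w (x :: l ++ x :: r) =
    cycle_weight w (x :: l) + walk_weight w (x :: r).
  by rewrite -cat_rcons walk_weight_cat last_rcons.
have first_edge : walk_weight w (x :: l ++ x :: r) = w x y + walk_weight w (l ++ x :: r).
  by rewrite eq walk_weight_cons.
rewrite walk_weight_cons; lra.
Qed.

Lemma closed_walk_gt0 x p : is_walk E x x p -> (1 < size p)%N -> 0 < walk_weight w p.
Proof.
case/walk_shorten=> q /is_path_loop -> [<- // | ].
by rewrite [walk_weight w [:: x]]/walk_weight big_nil.
Qed.

Lemma crossing_weight_gt0 s1 t1 s2 t2 P1 P2 x y :
  is_walk E s1 t1 P1 -> is_walk E s2 t2 P2 ->
  precedes P1 x y -> precedes P2 y x -> x != y ->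
  0 < walk_weight w (subpath P1 x y) + walk_weight w (subpath P2 y x).
Proof.
move=> wP1 wP2 xy yx neq_xy.
have wxy := subpath_walk wP1 xy; have wyx := subpath_walk wP2 yx.
rewrite -(walk_weight_walk_cat wxy wyx); apply: closed_walk_gt0 (is_walk_cat wxy wyx) _.
have [[|z q] -> /= lq] := subpath_consE xy; last by [].
by rewrite lq eqxx in neq_xy.
Qed.

Lemma shortest_subpath_le s t P a b q : shortest_path E w s t P ->
  precedes P a b -> is_walk E a b q ->
  walk_weight w (subpath P a b) <= walk_weight w q.
Proof.
move=> [pP minP] ab wq; have [aP bP _] := ab; have wP := is_path_walk pP.
have [[sa _] [_ bt]] := (is_path_precedes pP aP, is_path_precedes pP bP).
have wsa := subpath_walk wP sa; have wbt := subpath_walk wP bt.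
have wsq := is_walk_cat wsa wq; have [Q pQ Q_le] := walk_shorten (is_walk_cat wsq wbt).
have := minP Q pQ; have {Q_le} : walk_weight w Q <= walk_weight w
    ((subpath P s a ++ behead q) ++ behead (subpath P b t)) by case: Q_le => [->|/ltW].
have split_P : walk_weight w P = walk_weight w (subpath P s a) +
    walk_weight w (subpath P a b) + walk_weight w (subpath P b t).
  rewrite -{1}(subpath_full pP) (subpath_weightD sa (precedes_trans ab bt)).
  by rewrite (subpath_weightD ab bt) addrA.
rewrite (walk_weight_walk_cat wsq wbt) (walk_weight_walk_cat wsa wq); lra.
Qed.

Lemma shortest_subpath_weight_eq s1 t1 s2 t2 P1 P2 a b :
  shortest_path E w s1 t1 P1 -> shortest_path E w s2 t2 P2 ->
  precedes P1 a b -> precedes P2 a b ->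
  walk_weight w (subpath P1 a b) = walk_weight w (subpath P2 a b).
Proof.
move=> sp1 sp2 ab1 ab2; apply/eqP; rewrite eq_le.
rewrite (shortest_subpath_le sp1 ab1 (subpath_walk (is_path_walk sp2.1) ab2)).
by rewrite (shortest_subpath_le sp2 ab2 (subpath_walk (is_path_walk sp1.1) ab1)).
Qed.

End Weights.

Section ShortestPair.
Variables (R : realDomainType) (V : eqType) (E : rel V) (w : V -> V -> R).
Hypothesis cycle_weight_gt0 : forall c, is_cycle E c -> 0 < cycle_weight w c.
Variables (s1 t1 s2 t2 : V) (P1 P2 : seq V).
Hypotheses (sp1 : shortest_path E w s1 t1 P1) (sp2 : shortest_path E w s2 t2 P2).

Lemma no_meet_after_cross x y z :
  precedes P1 x y -> precedes P1 y z -> precedes P2 y x -> precedes P2 x z ->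
  x != y -> False.
Proof.
move=> xy1 yz1 yx2 xz2 neq_xy.
have := crossing_weight_gt0 cycle_weight_gt0 (is_path_walk sp1.1)
  (is_path_walk sp2.1) xy1 yx2 neq_xy.
have := shortest_subpath_weight_eq cycle_weight_gt0 sp1 sp2 (precedes_trans xy1 yz1) xz2.
have := shortest_subpath_weight_eq cycle_weight_gt0 sp1 sp2 yz1 (precedes_trans yx2 xz2).
rewrite (subpath_weightD w xy1 yz1) (subpath_weightD w yx2 xz2); lra.
Qed.

Lemma no_meet_before_cross x y z :
  precedes P1 z x -> precedes P1 x y -> precedes P2 z y -> precedes P2 y x ->
  x != y -> False.
Proof.
move=> zx1 xy1 zy2 yx2 neq_xy.
have := crossing_weight_gt0 cycle_weight_gt0 (is_path_walk sp1.1)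
  (is_path_walk sp2.1) xy1 yx2 neq_xy.
have := shortest_subpath_weight_eq cycle_weight_gt0 sp1 sp2 (precedes_trans zx1 xy1) zy2.
have := shortest_subpath_weight_eq cycle_weight_gt0 sp1 sp2 zx1 (precedes_trans zy2 yx2).
rewrite (subpath_weightD w zx1 xy1) (subpath_weightD w zy2 yx2); lra.
Qed.

Local Notation concordant12 := (concordant P1 s1 t1 P2 s2 t2).
Local Notation shared_end v := (v \in [:: s1; t1] /\ v \in [:: s2; t2]).

Lemma concordant_precedes a b : concordant12 a b -> precedes P1 a b /\ precedes P2 a b.
Proof. by case. Qed.

Lemma concordant_first a b u : concordant12 a b ->
  precedes P1 u a -> precedes P2 u a -> ~ shared_end u -> u = a.
Proof.
case=> _ _ _ disj _ ua1 ua2 not_end; have [[uP1 _ _] [uP2 _ _]] := (ua1, ua2).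
have [[s1u _] [s2u _]] := (is_path_precedes sp1.1 uP1, is_path_precedes sp2.1 uP2).
have [] := disj u.
- by apply/mem_subpath; [exact: is_path_uniq sp1.1 | exact: precedes_trans ua1 | ].
- by apply/mem_subpath; [exact: is_path_uniq sp2.1 | exact: precedes_trans ua2 | ].
rewrite !inE; case: (eqVneq u a) => // _; rewrite !orbF => /eqP us1 /eqP us2.
by case: not_end; rewrite !inE -us1 -us2 !eqxx.
Qed.

Lemma concordant_last a b u : concordant12 a b ->
  precedes P1 b u -> precedes P2 b u -> ~ shared_end u -> u = b.
Proof.
case=> _ _ _ _ disj bu1 bu2 not_end; have [[_ uP1 _] [_ uP2 _]] := (bu1, bu2).
have [[_ ut1] [_ ut2]] := (is_path_precedes sp1.1 uP1, is_path_precedes sp2.1 uP2).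
have [] := disj u.
- by apply/mem_subpath; [exact: is_path_uniq sp1.1 | exact: precedes_trans ut1 | ].
- by apply/mem_subpath; [exact: is_path_uniq sp2.1 | exact: precedes_trans ut2 | ].
rewrite !inE; case: (eqVneq u b) => //= _ /eqP ut1' /eqP ut2'.
by case: not_end; rewrite !inE -ut1' -ut2' !eqxx !orbT.
Qed.

Lemma concordant_firsts_reversed v1 w1 v2 w2 :
  concordant12 v1 w1 -> concordant12 v2 w2 ->
  ~ precedes P1 v2 v1 -> ~ precedes P2 v1 v2.
Proof.
move=> c1 c2 lt1 le2.
have [[vw1 _] [vw2 _]] := (concordant_precedes c1, concordant_precedes c2).
have le1 := precedes_of_not_precedes (precedes_meml vw1) (precedes_meml vw2) lt1.
have [not_end1 _ _ _ _] := c1.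
apply: lt1; rewrite (concordant_first c2 le1 le2 not_end1).
exact: precedes_refl (precedes_meml vw2).
Qed.

Lemma concordant_reversed v1 w1 v2 w2 :
  concordant12 v1 w1 -> concordant12 v2 w2 ->
  ~ precedes P1 v2 v1 -> ~ precedes P2 v1 w2.
Proof.
move=> c1 c2 lt1 le2.
have [[vw1_1 vw1_2] [vw2_1 vw2_2]] := (concordant_precedes c1, concordant_precedes c2).
have v12 := precedes_of_not_precedes (precedes_meml vw1_1) (precedes_meml vw2_1) lt1.
have v21 := precedes_of_not_precedes (precedes_meml vw2_2) (precedes_meml vw1_2)
  (concordant_firsts_reversed c1 c2 lt1).
apply: (no_meet_after_cross v12 vw2_1 v21 le2); apply/eqP=> eq_v.
by apply: lt1; rewrite eq_v; apply: precedes_refl (precedes_meml vw2_1).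
Qed.

Lemma concordant_separated v1 w1 v2 w2 :
  concordant12 v1 w1 -> concordant12 v2 w2 ->
  ~ precedes P1 v2 v1 -> ~ precedes P1 v2 w1.
Proof.
move=> c1 c2 lt1 v2w1.
have [[vw1_1 vw1_2] [vw2_1 vw2_2]] := (concordant_precedes c1, concordant_precedes c2).
have rev := concordant_reversed c1 c2 lt1.
have w21_2 : precedes P2 w2 w1.
  apply: (precedes_trans _ vw1_2).
  exact: precedes_of_not_precedes (precedes_memr vw2_2) (precedes_meml vw1_2) rev.
have neq_w : w1 != w2 by apply/eqP=> eq_w; apply: rev; rewrite -eq_w.
case: (precedes_total (precedes_memr vw1_1) (precedes_memr vw2_1)) => [w12 | w21].
  exact: no_meet_before_cross v2w1 w12 vw2_2 w21_2 neq_w.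
have [_ not_end1 _ _ _] := c1.
by move/eqP: neq_w; apply; apply: concordant_last c2 w21 w21_2 not_end1.
Qed.

Lemma concordant_second_unique v w1 w2 :
  concordant12 v w1 -> concordant12 v w2 -> w1 = w2.
Proof.
wlog w12 : w1 w2 / precedes P1 w1 w2.
  move=> wlog c1 c2.
  have [[vw1 _] [vw2 _]] := (concordant_precedes c1, concordant_precedes c2).
  case: (precedes_total (precedes_memr vw1) (precedes_memr vw2)) => le.
    exact: wlog.
  by symmetry; apply: wlog.
move=> c1 c2.
have [[vw1_1 vw1_2] [vw2_1 vw2_2]] := (concordant_precedes c1, concordant_precedes c2).
have [_ not_end2 _ _ _] := c2.
case: (precedes_total (precedes_memr vw1_2) (precedes_memr vw2_2)) => [w12' | w21'].
  by symmetry; apply: concordant_last c1 w12 w12' not_end2.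
case: (eqVneq w1 w2) => // neq_w.
by case: (no_meet_before_cross vw1_1 w12 vw2_2 w21' neq_w).
Qed.

End ShortestPair.

Lemma subpath_disjoint (V : finType) (P : seq V) a b c d : uniq P ->
  precedes P a b -> precedes P c d -> ~ precedes P c b ->
  [disjoint subpath P a b & subpath P c d].
Proof.
move=> uP ab cd not_cb; rewrite disjoint_has; apply/hasPn=> z /(mem_subpath z uP ab) [_ zb].
by apply/negP=> /(mem_subpath z uP cd) [cz _]; apply: not_cb (precedes_trans cz zb).
Qed.

Unset Implicit Arguments. Set Strict Implicit.

Theorem lemma4 (R : realType) (V : finType) (E : rel V) (w : V -> V -> R)
  (Hcyc : forall c : seq V, is_cycle E c -> 0 < cycle_weight w c)
  (s1 t1 s2 t2 : V) (P1 P2 : seq V)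
  (HP1 : shortest_path E w s1 t1 P1) (HP2 : shortest_path E w s2 t2 P2) :
  (forall v1 w1 v2 w2 : V,
     concordant P1 s1 t1 P2 s2 t2 v1 w1 ->
     concordant P1 s1 t1 P2 s2 t2 v2 w2 ->
     (v1, w1) <> (v2, w2) ->
     [disjoint subpath P1 v1 w1 & subpath P1 v2 w2] /\
     [disjoint subpath P2 v1 w1 & subpath P2 v2 w2]) /\
  (forall v1 w1 v2 w2 : V,
     concordant P1 s1 t1 P2 s2 t2 v1 w1 ->
     concordant P1 s1 t1 P2 s2 t2 v2 w2 ->
     (index v1 P1 < index v2 P1)%N ->
     (index w2 P2 < index v1 P2)%N).
Proof.
have disjoint_of_ltn v1 w1 v2 w2 :
    concordant P1 s1 t1 P2 s2 t2 v1 w1 -> concordant P1 s1 t1 P2 s2 t2 v2 w2 ->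
    (index v1 P1 < index v2 P1)%N ->
    [disjoint subpath P1 v1 w1 & subpath P1 v2 w2] /\
    [disjoint subpath P2 v1 w1 & subpath P2 v2 w2].
  move=> c1 c2 lt1.
  have [[vw1_1 vw1_2] [vw2_1 vw2_2]] := (concordant_precedes c1, concordant_precedes c2).
  move/ltn_index_not_precedes: lt1 => /(_ (precedes_meml vw1_1) (precedes_meml vw2_1)) lt1.
  split; last rewrite disjoint_sym.
    apply: subpath_disjoint (is_path_uniq HP1.1) vw1_1 vw2_1 _.
    exact: (concordant_separated Hcyc HP1 HP2 c1 c2 lt1).
  apply: subpath_disjoint (is_path_uniq HP2.1) vw2_2 vw1_2 _.
  exact: (concordant_reversed Hcyc HP1 HP2 c1 c2 lt1).
split=> v1 w1 v2 w2 c1 c2.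
  have [[vw1 _] [vw2 _]] := (concordant_precedes c1, concordant_precedes c2).
  case: (ltngtP (index v1 P1) (index v2 P1)) => [lt1 | gt1 | eq1] neq.
  - exact: disjoint_of_ltn.
  - have [d1 d2] := disjoint_of_ltn _ _ _ _ c2 c1 gt1.
    by rewrite disjoint_sym d1 disjoint_sym d2.
  move: c2 neq; rewrite -(index_inj v1 (precedes_meml vw1) (precedes_meml vw2) eq1) => c2.
  by rewrite (concordant_second_unique Hcyc HP1 HP2 c1 c2).
have [[vw1_1 vw1_2] [vw2_1 vw2_2]] := (concordant_precedes c1, concordant_precedes c2).
move/ltn_index_not_precedes => /(_ (precedes_meml vw1_1) (precedes_meml vw2_1)) lt1.
apply/ltn_index_not_precedes; [exact: precedes_memr vw2_2 | exact: precedes_meml vw1_2 | ].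
exact: (concordant_reversed Hcyc HP1 HP2 c1 c2 lt1).
Qed.
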